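(* Let $k$ be an algebraically closed field of characteristic $0$, $G$ an algebraic torus and $V$ any finite-dimensional algebraic $G$-module. Then $\mathrm{pol\,ind}(V)=\infty$.
   Context: For $n\in\mathbb N$, $G$ acts diagonally on $V^{\oplus n}$. Polarizations of $f\in k[V]$: $f(\alpha_1v_1+\dots+\alpha_nv_n)=\sum_{(i_1,\dots,i_n)\in\mathbb Z_+^n}\alpha_1^{i_1}\cdots\alpha_n^{i_n}f_{i_1,\dots,i_n}(v_1,\dots,v_n)$; $\mathrm{pol}_nk[V]^G\subseteq k[V^{\oplus n}]^G$ is generated by polarizations of all $f\in k[V]^G$. $\mathcal N_{V^{\oplus n},G}=\{w:F(w)=F(0)\ \forall F\in k[V^{\oplus n}]^G\}$, $\mathcal P_{V^{\oplus n},G}=\{w:h(w)=h(0)\ \forall h\in\mathrm{pol}_nk[V]^G\}$. The polarization index $\mathrm{pol\,ind}(V)$ is the supremum of all $n\in\mathbb N$ with $\mathcal N_{V^{\oplus n},G}=\mathcal P_{V^{\oplus n},G}$. *)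

From HB Require Import structures.
From mathcomp Require Import all_boot all_order all_algebra.
From mathcomp Require Export mpoly.
Set Implicit Arguments. Unset Strict Implicit. Unset Printing Implicit Defensive.
Import GRing.Theory.
Local Open Scope ring_scope.

Section Defs.
Variable k : fieldType.

Definition in_torus (r : nat) (t : 'I_r -> k) : Prop := forall i, t i != 0.
Definition torus_one (r : nat) : 'I_r -> k := fun _ => 1.
Definition torus_mul (r : nat) (s t : 'I_r -> k) : 'I_r -> k := fun i => s i * t i.

(* A finite-dimensional algebraic (rational) G-module V = k^d : a group
   homomorphism rho : G -> GL_d(k) whose matrix entries are regular functions
   on the torus, i.e. elements of k[t_1^{+-1},...,t_r^{+-1}], written as
   P(t) / (t_1 ... t_r)^N. *)
Definition algebraic_torus_module (r d : nat) (rho : ('I_r -> k) -> 'M[k]_d) : Prop :=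
  [/\ rho (@torus_one r) = 1%:M,
      (forall s t, in_torus s -> in_torus t ->
         rho (torus_mul s t) = rho s *m rho t) &
      exists (N : nat) (P : 'I_d -> 'I_d -> {mpoly k[r]}),
        forall t, in_torus t -> forall a b,
          rho t a b = (P a b).@[t] / (\prod_(i < r) t i) ^+ N].

(* A point of V^{(+) n} is an n x d matrix w whose i-th row is v_i;
   G acts diagonally: g.w has rows rho(g) v_i, i.e. g.w = w *m (rho g)^T.
   k[V^{(+) n}] = {mpoly k[n * d]}, the coordinate of index
   mxvec_index i j being the j-th coordinate of v_i. *)
Definition evalVn (n d : nat) (F : {mpoly k[n * d]}) (w : 'M[k]_(n, d)) : k :=
  F.@[fun x => mxvec w 0 x].

Definition actVn (r n d : nat) (rho : ('I_r -> k) -> 'M[k]_d) (g : 'I_r -> k)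
  (w : 'M[k]_(n, d)) : 'M[k]_(n, d) := w *m (rho g)^T.

Definition invariant (r n d : nat) (rho : ('I_r -> k) -> 'M[k]_d)
  (F : {mpoly k[n * d]}) : Prop :=
  forall g, in_torus g -> forall w, evalVn F (actVn rho g w) = evalVn F w.

Definition invariantV (r d : nat) (rho : ('I_r -> k) -> 'M[k]_d)
  (f : {mpoly k[d]}) : Prop :=
  forall g, in_torus g -> forall v : 'cV[k]_d,
    f.@[fun x => (rho g *m v) x 0] = f.@[fun x => v x 0].

(* Polarization: substitute x_j |-> sum_i alpha_i * y_{i j} in f, where the
   alpha_i are the variables of the outer polynomial ring and y_{i j} the
   coordinates of V^{(+) n}; f_{m} is the coefficient of alpha^m. *)
Definition polar_subst (n d : nat) : d.-tuple {mpoly {mpoly k[n * d]}[n]} :=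
  [tuple \sum_(i < n) 'X_i * ('X_(mxvec_index i j))%:MP | j < d].

Definition polarization (n d : nat) (f : {mpoly k[d]}) (m : 'X_{1..n})
  : {mpoly k[n * d]} :=
  (map_mpoly (fun c : k => c%:MP_[n * d]) f \mPo polar_subst n d)@_m.

Definition pol_gen (r n d : nat) (rho : ('I_r -> k) -> 'M[k]_d)
  (F : {mpoly k[n * d]}) : Prop :=
  exists (f : {mpoly k[d]}) (m : 'X_{1..n}), invariantV rho f /\ F = polarization f m.

Definition subalg_gen (N : nat) (S : {mpoly k[N]} -> Prop) (F : {mpoly k[N]}) : Prop :=
  forall A : {mpoly k[N]} -> Prop,
    (forall G, S G -> A G) ->
    (forall c : k, A c%:MP) ->
    (forall G H, A G -> A H -> A (G + H)) ->
    (forall G H, A G -> A H -> A (G * H)) ->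
    A F.

Definition pol_alg (r n d : nat) (rho : ('I_r -> k) -> 'M[k]_d) :=
  subalg_gen (pol_gen rho (n:=n)).

Definition nullcone (r n d : nat) (rho : ('I_r -> k) -> 'M[k]_d) (w : 'M[k]_(n, d)) : Prop :=
  forall F, invariant rho F -> evalVn F w = evalVn F 0.

Definition polcone (r n d : nat) (rho : ('I_r -> k) -> 'M[k]_d) (w : 'M[k]_(n, d)) : Prop :=
  forall h, pol_alg rho h -> evalVn h w = evalVn h 0.

(* pol ind(V) = infinity: the set of n in N with N = P is unbounded. *)
Definition pol_ind_infinite (r d : nat) (rho : ('I_r -> k) -> 'M[k]_d) : Prop :=
  forall m : nat, exists n : nat, (m <= n)%N /\
    (forall w : 'M[k]_(n, d), nullcone rho w <-> polcone rho w).
End Defs.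

(* Polarizations of invariants are invariants, so the nullcone of V^n lies in
   the polarization cone for every n; the point is the converse.  Over the
   torus, rho t = sum_q lambda_q(t) E_q with Laurent-monomial characters
   lambda_q and orthogonal idempotents E_q summing to 1.  If an invariant F
   separates w = (w_1, ..., w_n) from 0, then G(u) = F(sum_q u_q w E_q^T) is
   not constant, and any nonconstant monomial u^c of G is torus-invariant and
   only involves weights q with w E_q^T <> 0.  Choosing for each such q a
   coordinate l_q of E_q v that does not vanish on all the E_q w_i, the product
   f = prod_q l_q^(c_q) is an invariant of V such that f(a_1 w_1 + ... + a_n w_n)
   is a nonzero polynomial in a vanishing at a = 0.  Its coefficients are
   polarizations of f, so w is not in the polarization cone either.
   Characteristic 0 is only used to identify polynomials with polynomial
   functions. *)

From Pilot Require Import Defs.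
From mathcomp Require Import all_boot all_order all_algebra.
From mathcomp Require Import mpoly.
From Stdlib Require Import Classical.
Import GRing.Theory.
Set Implicit Arguments. Unset Strict Implicit. Unset Printing Implicit Defensive.
Local Open Scope ring_scope.

Lemma base_expansion_inj (B n : nat) (a b : 'I_n -> nat) :
  (forall i, a i < B)%N -> (forall i, b i < B)%N ->
  (\sum_i a i * B ^ i = \sum_i b i * B ^ i)%N -> a =1 b.
Proof.
elim: n a b => [|n IHn] a b ha hb; first by move=> _ [].
have expand (c : 'I_n.+1 -> nat) : (\sum_i c i * B ^ i =
    (\sum_(i < n) c (lift ord0 i) * B ^ i) * B + c ord0)%N.
  rewrite big_ord_recl expn0 muln1 addnC big_distrl; congr (_ + _).
  by apply: eq_bigr => i _; rewrite /= /bump /= add1n expnS mulnCA mulnC.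
rewrite !expand => /(congr1 (edivn^~ B)); rewrite !edivn_eq // => -[eq_hi eq0] i.
case: (unliftP ord0 i) => [j ->|-> //].
exact: (IHn (fun j => a (lift ord0 j)) (fun j => b (lift ord0 j))).
Qed.

Lemma msupp_neq0_of_meval_neq (k : fieldType) n (G : {mpoly k[n]}) u v :
  G.@[u] != G.@[v] -> exists2 c, c \in msupp G & c != 0%MM.
Proof.
move=> neq_uv; apply/hasP; apply: contraNT neq_uv => /hasPn msupp0.
rewrite !mevalE; apply/eqP/eq_big_seq => m /msupp0; rewrite negbK => /eqP ->.
by rewrite !big1 // => i _; rewrite mnm0E expr0.
Qed.

Section CharZero.
Variable k : fieldType.
Hypothesis char0 : [pchar k] =i pred0.

Let natr_inj : injective (fun j : nat => j%:R : k).
Proof.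
move=> i j /eqP; wlog le_ji : i j / (j <= i)%N => [wlog_eq|].
  by case: (leqP j i) => [/wlog_eq//|/ltnW /wlog_eq]; rewrite eq_sym => h /h.
rewrite -subr_eq0 -natrB // (proj1 (pcharf0P k) char0) subn_eq0 => le_ij.
by apply/eqP; rewrite eqn_leq le_ij.
Qed.

(* Kronecker substitution x_i := s ^ B ^ i turns p into a univariate
   polynomial with the same coefficients, vanishing at 1, 2, 3, ... *)
Lemma mpoly_torus_eq0 n (p : {mpoly k[n]}) :
  (forall t : 'I_n -> k, (forall i, t i != 0) -> p.@[t] = 0) -> p = 0.
Proof.
move=> p_torus0; set B := (msize p).+1.
have pE := mpolywE (leqnSn (msize p)); rewrite -/B in pE.
pose e (m : 'X_{1..n}) := (\sum_(i < n) m i * B ^ i)%N.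
pose q : {poly k} := \sum_(m : 'X_{1..n < B}) p@_m *: 'X^(e m).
have qE s : q.[s] = p.@[fun i => s ^+ (B ^ i)].
  rewrite [in RHS]pE horner_sum raddf_sum; apply: eq_bigr => m _.
  rewrite hornerZ hornerXn /= mevalZ mevalX -prodrXr; congr (_ * _).
  by apply: eq_bigr => i _; rewrite -exprM mulnC.
have q0 : q = 0.
  apply/eqP; apply: contraT => nz_q.
  have := max_poly_roots nz_q (rs := [seq j%:R | j <- iota 1 (size q)]).
  rewrite size_map size_iota ltnn; apply.
    apply/allP => x /mapP [j]; rewrite mem_iota => /andP [j_gt0 _] ->.
    rewrite /root qE p_torus0 // => i; apply: expf_neq0.
    by rewrite (proj1 (pcharf0P k) char0) -lt0n.
  by rewrite (map_inj_uniq natr_inj) iota_uniq.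
have bmdeg_lt (m : 'X_{1..n < B}) i : (m i < B)%N.
  by apply: leq_ltn_trans (bmdeg m); rewrite mdegE (bigD1 i) //= leq_addr.
have coef0 (m : 'X_{1..n < B}) : p@_m = 0.
  have := congr1 (fun q : {poly k} => q`_(e m)) q0.
  rewrite /= coef0 /q coef_sum (bigD1 m) //= coefZ coefXn eqxx mulr1.
  rewrite big1 ?addr0 // => m' neq_m'm; rewrite coefZ coefXn.
  case: eqP => [eq_e|]; last by rewrite mulr0.
  case/eqP: neq_m'm; apply/val_inj/mnmP.
  exact: (base_expansion_inj (bmdeg_lt m') (bmdeg_lt m)).
by rewrite pE big1 // => m _; rewrite coef0 scale0r.
Qed.

Lemma mpoly_eval_inj n (p q : {mpoly k[n]}) :
  (forall t : 'I_n -> k, p.@[t] = q.@[t]) -> p = q.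
Proof.
move=> eq_pq; apply/eqP; rewrite -subr_eq0; apply/eqP/mpoly_torus_eq0 => t _.
by rewrite mevalB eq_pq subrr.
Qed.

Lemma mpoly_neq0_meval n (p : {mpoly k[n]}) : p != 0 -> exists t, p.@[t] != 0.
Proof.
move=> nz_p; apply: NNPP => no_t; case/eqP: nz_p.
apply: mpoly_torus_eq0 => t _; apply/eqP; apply: NNPP => nz_pt.
by apply: no_t; exists t; apply/negP.
Qed.

Lemma msupp_scale_invariant n (G : {mpoly k[n]}) (mu : 'I_n -> k) :
  (forall u, G.@[fun i => mu i * u i] = G.@[u]) ->
  forall c, c \in msupp G -> \prod_i mu i ^+ c i = 1.
Proof.
move=> G_inv c c_supp.
pose Gmu := \sum_(c' <- msupp G) (G@_c' * \prod_i mu i ^+ c' i) *: 'X_[c'].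
have GmuE : Gmu = G.
  apply: mpoly_eval_inj => u; rewrite -G_inv [in RHS]mevalE rmorph_sum /=.
  apply: eq_bigr => c' _; rewrite mevalZ mevalX -mulrA -big_split /=.
  by congr (_ * _); apply: eq_bigr => i _; rewrite exprMn.
have := congr1 (mcoeff c) GmuE; rewrite raddf_sum (bigD1_seq c) ?msupp_uniq //=.
rewrite mcoeffZ mcoeffX eqxx mulr1 [X in _ + X]big1 ?addr0; last first.
  by move=> c' /negbTE neq_c'c; rewrite mcoeffZ mcoeffX neq_c'c mulr0.
rewrite -[RHS]mulr1 => /mulfI; apply.
by rewrite -mcoeff_msupp.
Qed.

End CharZero.

Section LinearForms.
Variables (k : fieldType) (n : nat).

Definition linear_form (c : 'I_n -> k) : {mpoly k[n]} := \sum_i c i *: 'X_i.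

Lemma meval_linear_form c v : (linear_form c).@[v] = \sum_i c i * v i.
Proof. by rewrite rmorph_sum /=; apply: eq_bigr => i _; rewrite mevalZ mevalXU. Qed.

Lemma linear_form_eq0 c : linear_form c = 0 -> forall i, c i = 0.
Proof.
move=> c0 i; have := congr1 (mcoeff U_(i)) c0.
rewrite mcoeff0 raddf_sum (bigD1 i) //= mcoeffZ mcoeffXU eqxx mulr1.
rewrite [X in _ + X]big1 ?addr0 // => j /negbTE neq_ji.
by rewrite mcoeffZ mcoeffXU neq_ji mulr0.
Qed.

End LinearForms.

Section Polarization.
Variables (k : fieldType) (n d : nat).

Definition polarization_poly (f : {mpoly k[d]}) : {mpoly {mpoly k[n * d]}[n]} :=
  map_mpoly (fun c : k => c%:MP_[n * d]) f \mPo polar_subst k n d.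

Definition rows_comb (a : 'I_n -> k) (w : 'M[k]_(n, d)) : 'cV[k]_d :=
  (\row_i a i *m w)^T.

Lemma rows_combE a w j : rows_comb a w j 0 = \sum_i a i * w i j.
Proof. by rewrite !mxE; apply: eq_bigr => i _; rewrite mxE. Qed.

Lemma rows_comb0 a : rows_comb a 0 = 0.
Proof. by rewrite /rows_comb mulmx0 trmx0. Qed.

Lemma rows_comb_act a w (M : 'M[k]_d) : rows_comb a (w *m M^T) = M *m rows_comb a w.
Proof. by rewrite /rows_comb mulmxA trmx_mul trmxK. Qed.

Lemma meval_polarization_poly f w a :
  (map_mpoly (meval (fun x => mxvec w 0 x)) (polarization_poly f)).@[a]
  = f.@[fun j => rows_comb a w j 0].
Proof.
have monomialE (c : k) (m : 'X_{1..d}) :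
    (map_mpoly (meval (fun x => mxvec w 0 x))
       (map_mpoly (@mpolyC (n * d) k) (c *: 'X_[m]) \mPo polar_subst k n d)).@[a]
    = (c *: 'X_[m]).@[fun j => rows_comb a w j 0].
  rewrite !map_mpolyZ /= map_mpolyX comp_mpolyZ comp_mpolyX map_mpolyZ /=.
  rewrite !mevalZ mevalC mevalX !rmorph_prod; congr (_ * _); apply: eq_bigr => j _.
  rewrite !rmorphXn /= tnth_mktuple rows_combE; congr (_ ^+ _).
  rewrite (rmorph_sum (map_mpoly (meval (fun x => mxvec w 0 x)))) rmorph_sum.
  apply: eq_bigr => i _.
  rewrite /= !rmorphM /= map_mpolyC map_mpolyX mevalC mevalXU -mxvecE.
  by congr (_ * _); apply: mevalXU.
rewrite /polarization_poly.
change (fun c : k => c%:MP_[n * d]) with (@mpolyC (n * d) k).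
rewrite [in LHS](mpolyE f) [in RHS](mpolyE f).
rewrite (rmorph_sum (map_mpoly (@mpolyC (n * d) k))).
rewrite (raddf_sum (comp_mpoly (polar_subst k n d))).
rewrite (rmorph_sum (map_mpoly (meval (fun x => mxvec w 0 x)))) !rmorph_sum.
by apply: eq_bigr => m _; apply: monomialE.
Qed.

Variables (r : nat) (rho : ('I_r -> k) -> 'M[k]_d).
Hypothesis char0 : [pchar k] =i pred0.

Lemma polarization_invariant f m :
  invariantV rho f -> Defs.invariant rho (polarization f m : {mpoly k[n * d]}).
Proof.
move=> f_inv g g_torus w; rewrite /evalVn.
suff eq_gen : map_mpoly (meval (fun x => mxvec (actVn rho g w) 0 x)) (polarization_poly f)
            = map_mpoly (meval (fun x => mxvec w 0 x)) (polarization_poly f).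
  by have := congr1 (mcoeff m) eq_gen; rewrite !mcoeff_map_mpoly.
apply: (mpoly_eval_inj char0) => a; rewrite !meval_polarization_poly.
rewrite -[RHS](f_inv g g_torus); apply: meval_eq => j.
by rewrite /actVn rows_comb_act.
Qed.

Lemma pol_alg_invariant (h : {mpoly k[n * d]}) : pol_alg rho h -> Defs.invariant rho h.
Proof.
apply.
- by move=> _ [f [m [f_inv ->]]]; apply: polarization_invariant.
- by move=> c g _ w; rewrite /evalVn !mevalC.
- move=> G H G_inv H_inv g g_torus w.
  by rewrite /evalVn !mevalD -!/(evalVn _ _) G_inv ?H_inv.
- move=> G H G_inv H_inv g g_torus w.
  by rewrite /evalVn !mevalM -!/(evalVn _ _) G_inv ?H_inv.
Qed.

Lemma nullcone_polcone (w : 'M[k]_(n, d)) : nullcone rho w -> polcone rho w.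
Proof. by move=> w_null h /pol_alg_invariant; apply: w_null. Qed.

Lemma polcone_meval_rows_comb w f : polcone rho w -> invariantV rho f ->
  forall a, f.@[fun j => rows_comb a w j 0] = f.@[fun _ => 0].
Proof.
move=> w_pol f_inv a.
have eq_gen : map_mpoly (meval (fun x => mxvec w 0 x)) (polarization_poly f)
  = map_mpoly (meval (fun x => mxvec (0 : 'M[k]_(n, d)) 0 x)) (polarization_poly f).
  apply/mpolyP => m; rewrite !mcoeff_map_mpoly.
  by apply: (w_pol (polarization f m)) => A gen_A _ _ _; apply: gen_A; exists f, m.
have := congr1 (meval a) eq_gen; rewrite !meval_polarization_poly rows_comb0 => ->.
by apply: meval_eq => j; rewrite mxE.
Qed.

End Polarization.

Section LaurentMonomials.
Variables (k : fieldType) (r N : nat).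

Definition laurent_monomial (m : 'X_{1..r}) (t : 'I_r -> k) : k :=
  (\prod_i t i ^+ m i) / (\prod_i t i) ^+ N.

Lemma laurent_monomialM m s t :
  laurent_monomial m (torus_mul s t) = laurent_monomial m s * laurent_monomial m t.
Proof.
rewrite /laurent_monomial /torus_mul; under eq_bigr do rewrite exprMn.
by rewrite !big_split /= exprMn invfM mulrACA.
Qed.

Lemma laurent_monomial1 m : laurent_monomial m (@torus_one k r) = 1.
Proof.
rewrite /laurent_monomial /torus_one.
by under eq_bigr do rewrite expr1n; rewrite !big1_eq expr1n divr1.
Qed.

Hypothesis char0 : [pchar k] =i pred0.

Lemma laurent_monomial_indep (B p q : nat) (X : 'X_{1..r < B} -> 'M[k]_(p, q)) :
  (forall t, in_torus t -> \sum_(m : 'X_{1..r < B}) laurent_monomial m t *: X m = 0) ->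
  forall m, X m = 0.
Proof.
move=> X_comb0 m0; apply/matrixP => a b; rewrite mxE.
pose P : {mpoly k[r]} := \sum_m X m a b *: 'X_[m].
have P0 : P = 0.
  apply: (mpoly_torus_eq0 char0) => t t_torus.
  have D_neq0 : (\prod_i t i) ^+ N != 0 by rewrite expf_neq0 //; apply/prodf_neq0 => i _.
  have := congr1 (fun M : 'M[k]_(p, q) => M a b * (\prod_i t i) ^+ N) (X_comb0 t t_torus).
  rewrite /= mxE mul0r summxE mulr_suml => <-.
  rewrite rmorph_sum /=; apply: eq_bigr => m _.
  by rewrite mevalZ mevalX !mxE /laurent_monomial mulrAC divfK // mulrC.
have := congr1 (mcoeff (bmnm m0)) P0.
rewrite raddf_sum (bigD1 m0) //= mcoeffZ mcoeffX eqxx mulr1 mcoeff0.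
rewrite big1 ?addr0 // => m neq_mm0.
by rewrite mcoeffZ mcoeffX -bmeqP (negbTE neq_mm0) mulr0.
Qed.

End LaurentMonomials.

Section CharacterExpansion.
Variables (k : fieldType) (r d : nat) (I : finType).
Variables (rho : ('I_r -> k) -> 'M[k]_d) (lam : I -> ('I_r -> k) -> k) (E : I -> 'M[k]_d).
Hypothesis rho1 : rho (@torus_one k r) = 1%:M.
Hypothesis rhoM : forall s t, in_torus s -> in_torus t ->
  rho (torus_mul s t) = rho s *m rho t.
Hypothesis lam1 : forall q, lam q (@torus_one k r) = 1.
Hypothesis lamM : forall q s t, lam q (torus_mul s t) = lam q s * lam q t.
Hypothesis lam_indep : forall X : I -> 'M[k]_d,
  (forall t, in_torus t -> \sum_q lam q t *: X q = 0) -> forall q, X q = 0.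
Hypothesis rhoE : forall t, in_torus t -> rho t = \sum_q lam q t *: E q.

Let lam_coef_eq (X Y : I -> 'M[k]_d) :
  (forall t, in_torus t -> \sum_q lam q t *: X q = \sum_q lam q t *: Y q) ->
  forall q, X q = Y q.
Proof.
move=> eqXY q; apply/eqP; rewrite -subr_eq0; apply/eqP; move: q; apply: lam_indep.
by move=> t t_torus; under eq_bigr do rewrite scalerBr; rewrite sumrB eqXY ?subrr.
Qed.

Lemma character_coef_sum1 : \sum_q E q = 1%:M.
Proof.
rewrite -rho1 rhoE; last by move=> i; rewrite oner_neq0.
by apply: eq_bigr => q _; rewrite lam1 scale1r.
Qed.

Lemma rho_mulmx_character_coef s q : in_torus s -> rho s *m E q = lam q s *: E q.
Proof.
move=> s_torus; apply: esym; move: q.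
apply: lam_coef_eq => t t_torus.
have st_torus : in_torus (torus_mul s t) by move=> i; rewrite mulf_neq0.
transitivity (rho (torus_mul s t)).
  by rewrite rhoE //; apply: eq_bigr => q _; rewrite scalerA lamM mulrC.
rewrite rhoM // (rhoE t_torus) mulmx_sumr.
by apply: eq_bigr => q _; rewrite -scalemxAr.
Qed.

Lemma character_coef_orth a b : E a *m E b = if a == b then E a else 0.
Proof.
suff: E a *m E b = if a == b then E b else 0 by case: eqP => // ->.
move: a; apply: lam_coef_eq => s s_torus.
rewrite [RHS](bigD1 b) //= eqxx [X in _ + X]big1 ?addr0; last first.
  by move=> a /negbTE ->; rewrite scaler0.
rewrite -rho_mulmx_character_coef // (rhoE s_torus) mulmx_suml.
by apply: eq_bigr => a _; rewrite scalemxAl.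
Qed.

End CharacterExpansion.

Lemma torus_module_weight_decomposition (k : fieldType) (char0 : [pchar k] =i pred0)
    (r d : nat) (rho : ('I_r -> k) -> 'M[k]_d) :
  algebraic_torus_module rho ->
  exists K (E : 'I_K -> 'M[k]_d) (lam : 'I_K -> ('I_r -> k) -> k),
  [/\ forall a b, E a *m E b = if a == b then E a else 0,
      \sum_q E q = 1%:M &
      forall t, in_torus t -> rho t = \sum_q lam q t *: E q].
Proof.
case=> rho1 rhoM [N [P rhoP]].
pose B := (\max_(ab : 'I_d * 'I_d) msize (P ab.1 ab.2))%N.
have msizeP a b : (msize (P a b) <= B)%N.
  exact: (@leq_bigmax _ (fun ab => msize (P ab.1 ab.2)) (a, b)).
pose E (m : 'X_{1..r < B}) : 'M[k]_d := \matrix_(a, b) (P a b)@_m.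
pose lam (m : 'X_{1..r < B}) (t : 'I_r -> k) := laurent_monomial N m t.
have rhoE t : in_torus t -> rho t = \sum_m lam m t *: E m.
  move=> t_torus; apply/matrixP => a b; rewrite rhoP // summxE.
  rewrite {1}(mpolywE (msizeP a b)) rmorph_sum /= mulr_suml; apply: eq_bigr => m _.
  by rewrite mevalZ mevalX !mxE /lam /laurent_monomial [RHS]mulrC mulrA.
have lam_indep (X : 'X_{1..r < B} -> 'M[k]_d) :=
  laurent_monomial_indep (N := N) char0 (X := X).
have lam1 m : lam m (@torus_one k r) = 1 by apply: laurent_monomial1.
have lamM m s t : lam m (torus_mul s t) = lam m s * lam m t.
  exact: laurent_monomialM.
have orth := character_coef_orth rhoM lamM lam_indep rhoE.
have sum1 := character_coef_sum1 rho1 lam1 rhoE.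
have reindex (F : 'X_{1..r < B} -> 'M[k]_d) :
    \sum_m F m = \sum_(q < #|{: 'X_{1..r < B}}|) F (enum_val q).
  by rewrite -big_enum_val.
exists #|{: 'X_{1..r < B}}|, (fun q => E (enum_val q)), (fun q => lam (enum_val q)).
split.
- by move=> a b; rewrite orth (inj_eq enum_val_inj).
- by rewrite -sum1 reindex.
- by move=> t t_torus; rewrite rhoE // reindex.
Qed.

Section WeightComponents.
Variables (k : fieldType) (r d K : nat) (rho : ('I_r -> k) -> 'M[k]_d).
Variables (E : 'I_K -> 'M[k]_d) (lam : 'I_K -> ('I_r -> k) -> k).
Hypothesis orth : forall a b, E a *m E b = if a == b then E a else 0.
Hypothesis sum1 : \sum_q E q = 1%:M.
Hypothesis rhoE : forall t, in_torus t -> rho t = \sum_q lam q t *: E q.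

Lemma rho_mulmx_weight t q : in_torus t -> rho t *m E q = lam q t *: E q.
Proof.
move=> t_torus; rewrite rhoE // mulmx_suml (bigD1 q) //= -scalemxAl orth eqxx.
rewrite big1 ?addr0 // => a /negbTE neq_aq.
by rewrite -scalemxAl orth neq_aq scaler0.
Qed.

Lemma weight_mulmx_rho t q : in_torus t -> E q *m rho t = lam q t *: E q.
Proof.
move=> t_torus; rewrite rhoE // mulmx_sumr (bigD1 q) //= -scalemxAr orth eqxx.
rewrite big1 ?addr0 // => a /negbTE neq_aq.
by rewrite -scalemxAr orth eq_sym neq_aq scaler0.
Qed.

Variable n : nat.
Implicit Types (w : 'M[k]_(n, d)) (u : 'I_K -> k).

Definition weight_comb w u : 'M[k]_(n, d) := \sum_q u q *: (w *m (E q)^T).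

Lemma weight_comb1 w : weight_comb w (fun _ => 1) = w.
Proof.
rewrite /weight_comb; under eq_bigr do rewrite scale1r.
by rewrite -mulmx_sumr -linear_sum sum1 /= trmx1 mulmx1.
Qed.

Lemma weight_comb0 w : weight_comb w (fun _ => 0) = 0.
Proof. by rewrite /weight_comb big1 // => q _; rewrite scale0r. Qed.

Lemma weight_comb_act w u t : in_torus t ->
  actVn rho t (weight_comb w u) = weight_comb w (fun q => lam q t * u q).
Proof.
move=> t_torus; rewrite /actVn /weight_comb mulmx_suml; apply: eq_bigr => q _.
rewrite -scalemxAl -mulmxA -trmx_mul rho_mulmx_weight // linearZ /= -scalemxAr.
by rewrite scalerA mulrC.
Qed.

Lemma weight_comb_eq w u u' :
  (forall q, w *m (E q)^T != 0 -> u q = u' q) -> weight_comb w u = weight_comb w u'.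
Proof.
move=> eq_uu'; apply: eq_bigr => q _.
have [->|/eq_uu' -> //] := eqVneq (w *m (E q)^T) 0.
by rewrite !scaler0.
Qed.

Definition weight_restriction (F : {mpoly k[n * d]}) w : {mpoly k[K]} :=
  F \mPo [tuple \sum_q mxvec (w *m (E q)^T) 0 x *: 'X_q | x < n * d].

Lemma meval_weight_restriction F w u :
  (weight_restriction F w).@[u] = evalVn F (weight_comb w u).
Proof.
rewrite comp_mpoly_meval /evalVn; apply: meval_eq => x.
rewrite tnth_mktuple rmorph_sum /= /weight_comb linear_sum summxE.
by apply: eq_bigr => q _; rewrite mevalZ mevalXU linearZ mxE mulrC.
Qed.

Hypothesis char0 : [pchar k] =i pred0.

Lemma nonnull_weight_monomial F w :
  Defs.invariant rho F -> evalVn F w != evalVn F 0 ->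
  exists c : 'X_{1..K}, [/\ c != 0%MM,
    forall q, w *m (E q)^T = 0 -> c q = 0%N &
    forall t, in_torus t -> \prod_q lam q t ^+ c q = 1].
Proof.
move=> F_inv F_sep; pose G := weight_restriction F w.
have [c c_supp c_neq0] : exists2 c, c \in msupp G & c != 0%MM.
  apply: (@msupp_neq0_of_meval_neq _ _ _ (fun _ => 1) (fun _ => 0)).
  by rewrite !meval_weight_restriction weight_comb1 weight_comb0.
exists c; split=> // [q wq0|t t_torus].
  pose mu q := if w *m (E q)^T == 0 then 0 else 1 : k.
  have mu_inv u : G.@[fun i => mu i * u i] = G.@[u].
    rewrite !meval_weight_restriction; congr evalVn.
    by apply: weight_comb_eq => q' /negbTE wq'_neq0; rewrite /mu wq'_neq0 mul1r.
  have := msupp_scale_invariant char0 mu_inv c_supp.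
  rewrite (bigD1 q) //= /mu wq0 eqxx expr0n.
  have [//|_] := eqVneq (c q) 0%N.
  by rewrite mul0r => /eqP; rewrite eq_sym oner_eq0.
apply: (msupp_scale_invariant char0 _ c_supp) => u.
by rewrite !meval_weight_restriction -weight_comb_act ?F_inv.
Qed.

Lemma weight_monomial_separates w (c : 'X_{1..K}) :
  c != 0%MM -> (forall q, w *m (E q)^T = 0 -> c q = 0%N) ->
  (forall t, in_torus t -> \prod_q lam q t ^+ c q = 1) ->
  exists f a, invariantV rho f /\ f.@[fun j => rows_comb a w j 0] != f.@[fun _ => 0].
Proof.
move=> c_neq0 c_supp c_lam.
have [q0 cq0_neq0] : exists q0, c q0 != 0%N.
  apply/existsP; apply: contraNT c_neq0 => /existsPn c0.
  by apply/eqP/mnmP => q; rewrite mnm0E; apply/eqP/negbNE/c0.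
have col_neq0 q : c q != 0%N -> exists j, col j (w *m (E q)^T) != 0.
  move=> cq_neq0; apply/existsP; apply: contraNT cq_neq0 => /existsPn col0.
  apply/eqP/c_supp/matrixP => i j.
  by have /negbNE/eqP/matrixP/(_ i 0) := col0 j; rewrite !mxE.
have [j0 _] := col_neq0 q0 cq0_neq0.
pose pivot q := odflt j0 [pick j | col j (w *m (E q)^T) != 0].
have pivotP q : c q != 0%N -> col (pivot q) (w *m (E q)^T) != 0.
  rewrite /pivot; case: pickP => [j //|col0 /col_neq0 [j]].
  by rewrite col0.
pose L q : {mpoly k[d]} := linear_form (fun j => E q (pivot q) j).
pose ell q : {mpoly k[n]} := linear_form (fun i => (w *m (E q)^T) i (pivot q)).
have L_eval q (v : 'cV[k]_d) : (L q).@[fun j => v j 0] = (E q *m v) (pivot q) 0.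
  by rewrite meval_linear_form mxE.
have L_rows_comb q a : (L q).@[fun j => rows_comb a w j 0] = (ell q).@[a].
  rewrite L_eval meval_linear_form /rows_comb -{1}[E q]trmxK -trmx_mul mxE -mulmxA mxE.
  by apply: eq_bigr => i _; rewrite mxE mulrC.
have ell_neq0 q : ell q ^+ c q != 0.
  have [->|cq_neq0] := eqVneq (c q) 0%N; first by rewrite expr0 oner_neq0.
  rewrite expf_neq0 //; apply: contra (pivotP q cq_neq0) => /eqP/linear_form_eq0 ell0.
  by apply/eqP/matrixP => i j; rewrite mxE ell0 mxE.
have [a ha] : exists a, (\prod_q ell q ^+ c q).@[a] != 0.
  by apply: (mpoly_neq0_meval char0); apply/prodf_neq0 => q _.
exists (\prod_q L q ^+ c q), a; split.
  move=> g g_torus v; rewrite !rmorph_prod /=.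
  transitivity (\prod_q (lam q g ^+ c q * (L q).@[fun j => v j 0] ^+ c q)).
    apply: eq_bigr => q _; rewrite !rmorphXn /= !L_eval mulmxA.
    by rewrite weight_mulmx_rho // -scalemxAl mxE exprMn.
  by rewrite big_split /= c_lam // mul1r; apply: eq_bigr => q _; rewrite rmorphXn.
have L_at0 q : (L q).@[fun _ => 0] = 0.
  by rewrite meval_linear_form big1 // => j _; rewrite mulr0.
rewrite !rmorph_prod /= [X in _ != X](bigD1 q0) //= rmorphXn /= L_at0 expr0n.
rewrite (negbTE cq0_neq0) mul0r; move: ha; rewrite rmorph_prod.
by under eq_bigr do rewrite rmorphXn /= -L_rows_comb -rmorphXn.
Qed.

Lemma polcone_nullcone w : polcone rho w -> nullcone rho w.
Proof.
move=> w_pol F F_inv; apply/eqP; apply: contraT => F_sep.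
have [c [c_neq0 c_supp c_lam]] := nonnull_weight_monomial F_inv F_sep.
have [f [a [f_inv]]] := weight_monomial_separates c_neq0 c_supp c_lam.
by rewrite (polcone_meval_rows_comb w_pol f_inv) eqxx.
Qed.

End WeightComponents.

Theorem theorem3p10 (k : closedFieldType) (char0 : [pchar k] =i pred0)
  (r d : nat) (rho : ('I_r -> k) -> 'M[k]_d) :
  algebraic_torus_module rho -> pol_ind_infinite rho.
Proof.
move=> rho_mod m; exists m; split=> // w; split; first exact: nullcone_polcone.
have [K [E [lam [orth sum1 rhoE]]]] := torus_module_weight_decomposition char0 rho_mod.
exact: (polcone_nullcone orth sum1 rhoE char0).
Qed.
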